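(* Every $\cap$-edge simplicial graph is split.
   Context: A clique $C$ is simplicial if $C=N[v]$ for some vertex $v$; a graph is edge simplicial if every edge lies in a simplicial clique; it is $\cap$-edge simplicial if both it and its complement are edge simplicial. A graph is split if its vertex set can be partitioned into a clique and a stable set. *)

From mathcomp Require Import all_boot.
Set Implicit Arguments. Unset Strict Implicit. Unset Printing Implicit Defensive.

Definition simple_graph (T : finType) (e : rel T) : Prop :=
  symmetric e /\ irreflexive e.

Definition compl_rel (T : finType) (e : rel T) : rel T :=
  fun x y => (x != y) && ~~ e x y.

Definition closed_nbhd (T : finType) (e : rel T) (v : T) : {set T} :=
  v |: [set u | e v u].

Definition is_clique (T : finType) (e : rel T) (C : {set T}) : Prop :=
  forall x y, x \in C -> y \in C -> x != y -> e x y.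

Definition is_stable (T : finType) (e : rel T) (S : {set T}) : Prop :=
  forall x y, x \in S -> y \in S -> ~~ e x y.

Definition simplicial_clique (T : finType) (e : rel T) (C : {set T}) : Prop :=
  is_clique e C /\ exists v, C = closed_nbhd e v.

Definition edge_simplicial (T : finType) (e : rel T) : Prop :=
  forall x y, e x y ->
    exists C : {set T}, [/\ simplicial_clique e C, x \in C & y \in C].

Definition cap_edge_simplicial (T : finType) (e : rel T) : Prop :=
  edge_simplicial e /\ edge_simplicial (compl_rel e).

Definition is_split (T : finType) (e : rel T) : Prop :=
  exists K S : {set T},
    [/\ K :&: S = set0, K :|: S = setT, is_clique e K & is_stable e S].

From mathcomp Require Import all_boot.

Set Implicit Arguments.
Unset Strict Implicit.
Unset Printing Implicit Defensive.

(* Call v simplicial when N[v] is a clique, and cosimplicial when it is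
   simplicial in the complement.  If a simplicial vertex u is adjacent to w,
   then N[u] is contained in N[w]; with edge simpliciality this shows that the
   non-neighbours of a cosimplicial vertex are simplicial and, dually, that the
   neighbours of a simplicial vertex are cosimplicial, so every vertex is
   simplicial or cosimplicial.  If some vertex v is both, N[v] and its
   complement split the graph; otherwise the cosimplicial vertices form a
   clique and the remaining (simplicial) vertices a stable set. *)

Definition cliqueb (T : finType) (e : rel T) (C : {set T}) : bool :=
  [forall x in C, forall y in C, (x != y) ==> e x y].

Definition simplicial_vertex (T : finType) (e : rel T) (v : T) : bool :=
  cliqueb e (closed_nbhd e v).

Lemma cliqueP (T : finType) (e : rel T) (C : {set T}) :
  reflect (is_clique e C) (cliqueb e C).
Proof.
apply: (iffP forall_inP) => [cl x y xC yC xy | cl x xC].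
  by have /forall_inP/(_ y yC)/implyP := cl x xC; apply.
by apply/forall_inP => y yC; apply/implyP; apply: cl.
Qed.

Lemma mem_closed_nbhd (T : finType) (e : rel T) (v x : T) :
  (x \in closed_nbhd e v) = (x == v) || e v x.
Proof. by rewrite !inE. Qed.

Lemma notin_closed_nbhd_compl (T : finType) (e : rel T) (v x : T) :
  x \notin closed_nbhd e v -> x \in closed_nbhd (compl_rel e) v.
Proof.
rewrite !mem_closed_nbhd negb_or /compl_rel => /andP[xv ->].
by rewrite (eq_sym v) xv orbT.
Qed.

Section SimplicialVertices.

Variables (T : finType) (e : rel T).
Hypotheses (e_sym : symmetric e) (e_irr : irreflexive e).

Local Notation simplicial := (simplicial_vertex e).
Local Notation cosimplicial := (simplicial_vertex (compl_rel e)).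

Lemma simplicial_closed_nbhd_sub (u w : T) :
  simplicial u -> w \in closed_nbhd e u ->
  closed_nbhd e u \subset closed_nbhd e w.
Proof.
move=> /cliqueP Su wu; apply/subsetP => x xu.
rewrite mem_closed_nbhd; case: (eqVneq x w) => //= xw.
by apply: Su; rewrite // eq_sym.
Qed.

Lemma simplicial_or_simplicial_neighbour (p : T) :
  edge_simplicial e -> simplicial p \/ exists2 u, simplicial u & e u p.
Proof.
move=> es; case: (pickP (e p)) => [q epq | p_isolated].
  have [C [[Ccl [u defC]] pC _]] := es p q epq.
  have Su : simplicial u by apply/cliqueP; rewrite -defC.
  move: pC; rewrite defC mem_closed_nbhd => /orP[/eqP -> | eup]; first by left.
  by right; exists u.
left; apply/cliqueP => x y.
by rewrite !mem_closed_nbhd !p_isolated !orbF => /eqP -> /eqP ->; rewrite eqxx.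
Qed.

Lemma cosimplicial_nonneighbour_simplicial (w p : T) :
  edge_simplicial e -> cosimplicial w -> p != w -> ~~ e w p -> simplicial p.
Proof.
move=> es /cliqueP Cw pw nwp.
have [// | [u Su eup]] := simplicial_or_simplicial_neighbour p es.
have pu : p \in closed_nbhd e u by rewrite mem_closed_nbhd eup orbT.
case euw: (e u w).
  have wu : w \in closed_nbhd e u by rewrite mem_closed_nbhd euw orbT.
  have := subsetP (simplicial_closed_nbhd_sub Su wu) p pu.
  by rewrite mem_closed_nbhd (negbTE pw) (negbTE nwp).
have up : u != p by apply: contraTneq eup => ->; rewrite e_irr.
have uw : u != w by apply: contraTneq eup => ->; rewrite (negbTE nwp).
have uCw : u \in closed_nbhd (compl_rel e) w.
  by apply: notin_closed_nbhd_compl; rewrite mem_closed_nbhd (negbTE uw) e_sym euw.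
have pCw : p \in closed_nbhd (compl_rel e) w.
  by apply: notin_closed_nbhd_compl; rewrite mem_closed_nbhd (negbTE pw) (negbTE nwp).
by have /andP[_] := Cw u p uCw pCw up; rewrite eup.
Qed.

End SimplicialVertices.

Lemma compl_relK (T : finType) (e : rel T) :
  irreflexive e -> compl_rel (compl_rel e) =2 e.
Proof.
by move=> irr x y; rewrite /compl_rel; case: eqVneq => [-> | _]; rewrite ?irr ?negbK.
Qed.

Lemma compl_rel_sym (T : finType) (e : rel T) :
  symmetric e -> symmetric (compl_rel e).
Proof. by move=> sym x y; rewrite /compl_rel eq_sym sym. Qed.

Lemma compl_rel_irr (T : finType) (e : rel T) : irreflexive (compl_rel e).
Proof. by move=> x; rewrite /compl_rel eqxx. Qed.

Lemma eq_simplicial_vertex (T : finType) (e1 e2 : rel T) :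
  e1 =2 e2 -> simplicial_vertex e1 =1 simplicial_vertex e2.
Proof.
move=> e12 v; rewrite /simplicial_vertex /cliqueb.
have -> : closed_nbhd e1 v = closed_nbhd e2 v.
  by apply/setP => x; rewrite !mem_closed_nbhd e12.
by apply: eq_forallb_in => x _; apply: eq_forallb_in => y _; rewrite e12.
Qed.

Section SplitPartition.

Variables (T : finType) (e : rel T).
Hypotheses (e_sym : symmetric e) (e_irr : irreflexive e).
Hypothesis e_cap : cap_edge_simplicial e.

Local Notation simplicial := (simplicial_vertex e).
Local Notation cosimplicial := (simplicial_vertex (compl_rel e)).

Lemma simplicial_neighbour_cosimplicial (v q : T) :
  simplicial v -> e v q -> cosimplicial q.
Proof.
move=> Sv evq.
have Sv' : simplicial_vertex (compl_rel (compl_rel e)) v.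
  by rewrite (eq_simplicial_vertex (compl_relK e_irr)).
apply: (cosimplicial_nonneighbour_simplicial (compl_rel_sym e_sym)
          (@compl_rel_irr _ e) e_cap.2 Sv').
- by apply: contraTneq evq => ->; rewrite e_irr.
- by rewrite /compl_rel evq andbF.
Qed.

Lemma simplicial_or_cosimplicial (p : T) : simplicial p || cosimplicial p.
Proof.
have [-> // | [u Su eup]] := simplicial_or_simplicial_neighbour p e_cap.1.
by rewrite (simplicial_neighbour_cosimplicial Su eup) orbT.
Qed.

Lemma split_of_simplicial_cosimplicial (v : T) :
  simplicial v -> cosimplicial v -> is_split e.
Proof.
move=> Sv /cliqueP Cv; exists (closed_nbhd e v), (~: closed_nbhd e v).
split; [exact: setICr | exact: setUCr | exact/cliqueP |].
move=> x y; rewrite !in_setC => /notin_closed_nbhd_compl xv.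
move=> /notin_closed_nbhd_compl yv.
case: (eqVneq x y) => [-> | xy]; first by rewrite e_irr.
by have /andP[] := Cv x y xv yv xy.
Qed.

Lemma split_of_no_simplicial_cosimplicial :
  (forall v, ~~ (simplicial v && cosimplicial v)) -> is_split e.
Proof.
move=> not_both; exists [set x | cosimplicial x], (~: [set x | cosimplicial x]).
split; [exact: setICr | exact: setUCr | |].
  move=> x y; rewrite !inE => Cx Cy xy; apply: contraT => nexy.
  have yx : y != x by rewrite eq_sym.
  have Sy := cosimplicial_nonneighbour_simplicial e_sym e_irr e_cap.1 Cx yx nexy.
  by have := not_both y; rewrite Sy Cy.
move=> x y; rewrite !inE => nCx nCy; apply/negP => exy.
have Sx : simplicial x.
  by have := simplicial_or_cosimplicial x; rewrite (negbTE nCx) orbF.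
by rewrite (simplicial_neighbour_cosimplicial Sx exy) in nCy.
Qed.

End SplitPartition.

Theorem proposition27 (T : finType) (e : rel T) :
  simple_graph e -> cap_edge_simplicial e -> is_split e.
Proof.
move=> [e_sym e_irr] e_cap.
case: (pickP (fun v => simplicial_vertex e v && simplicial_vertex (compl_rel e) v))
  => [v /andP[Sv Cv] | not_both].
  exact: split_of_simplicial_cosimplicial Sv Cv.
by apply: split_of_no_simplicial_cosimplicial => // v; rewrite not_both.
Qed.
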